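(* Let $G$ be a strongly regular graph with parameters $(n,d,\lambda,\mu)$ and restricted eigenvalues $r>s$, and suppose that the clique number satisfies $\omega(G)=1-d/s$. Let $m$ be the number of edges of $G$, let $\theta_1\ge\theta_2\ge\cdots\ge\theta_n$ be the eigenvalues of its adjacency matrix, let $n^+$ be the number of positive eigenvalues, write $\omega=\omega(G)$, and let $\ell=\min(n^+,\omega)$. Then \[ \theta_1^2+\theta_2^2+\cdots+\theta_\ell^2\le \frac{2m(\omega-1)}{\omega}. \]
   Context: A strongly regular graph with parameters $(n,d,\lambda,\mu)$ is a $d$-regular graph on $n$ vertices in which every pair of adjacent vertices has exactly $\lambda$ common neighbours and every pair of distinct non-adjacent vertices has exactly $\mu$ common neighbours. Its restricted eigenvalues $r>s$ are the adjacency eigenvalues other than the degree $d$ (those with eigenvectors orthogonal to the all-ones vector). Here $\mu$ denotes the SRG parameter, not an eigenvalue. *)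

From HB Require Import structures.
From mathcomp Require Import all_boot all_order all_algebra.
Set Implicit Arguments. Unset Strict Implicit. Unset Printing Implicit Defensive.
Import Order.TTheory GRing.Theory Num.Theory.
Local Open Scope ring_scope.

Definition simple_graph (n : nat) (e : rel 'I_n) : Prop :=
  symmetric e /\ irreflexive e.

Definition common_nbrs (n : nat) (e : rel 'I_n) (x y : 'I_n) : nat :=
  #|[set z | e x z && e y z]|.

Definition degree (n : nat) (e : rel 'I_n) (x : 'I_n) : nat := #|[set z | e x z]|.

Definition srg (n : nat) (e : rel 'I_n) (d lam mu : nat) : Prop :=
  [/\ simple_graph e,
      (forall x, degree e x = d),
      (forall x y, e x y -> common_nbrs e x y = lam) &
      (forall x y, x != y -> ~~ e x y -> common_nbrs e x y = mu)]%N.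

Definition adj_mx (R : nzRingType) (n : nat) (e : rel 'I_n) : 'M[R]_n :=
  \matrix_(i, j) (e i j)%:R.

Definition restricted_eigenvalue (R : fieldType) (n : nat) (e : rel 'I_n) (t : R) : Prop :=
  exists v : 'rV[R]_n, [/\ v != 0, v *m adj_mx R e = t *: v & v *m (const_mx 1 : 'cV[R]_n) = 0].

Definition is_clique (n : nat) (e : rel 'I_n) (K : {set 'I_n}) : bool :=
  [forall x in K, forall y in K, (x != y) ==> e x y].

Definition clique_number (n : nat) (e : rel 'I_n) : nat :=
  \max_(K : {set 'I_n} | is_clique e K) #|K|.

Definition num_edges (n : nat) (e : rel 'I_n) : nat :=
  #|[set K : {set 'I_n} | (#|K| == 2)%N && is_clique e K]|.

Definition sorted_spectrum (R : rcfType) (n : nat) (e : rel 'I_n) (s : seq R) : Prop :=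
  sorted (fun x y => y <= x) s /\
  char_poly (adj_mx R e) = \prod_(x <- s) ('X - x%:P).

From mathcomp Require Import all_boot all_order all_algebra.
From mathcomp Require Import ring lra.
Import Order.TTheory GRing.Theory Num.Theory.
Set Implicit Arguments. Unset Strict Implicit. Unset Printing Implicit Defensive.
Local Open Scope ring_scope.

(* The adjacency spectrum of G lies in {d, r, s}. The restricted eigenvalues are the
   two roots of t^2 = (lam - mu) t + (d - mu), and Vieta's formulas give
   s < 0 <= r <= d. For each such eigenvalue t, the positive part of t^2 is at most
   d/(d - s) * t (t - s): for 0 <= t <= d the difference is -s t (d - t)/(d - s) >= 0,
   and for t = s both sides vanish. Summing over the spectrum bounds the squares of
   all positive eigenvalues, a fortiori of the l largest ones, by
   d/(d - s) * (tr A^2 - s tr A) = d/(d - s) * n d = d/(d - s) * 2m, and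
   omega = 1 - d/s turns d/(d - s) into (omega - 1)/omega. *)

Lemma comp_polyXn_inj (R : nzSemiRingType) k :
  (0 < k)%N -> injective (comp_poly ('X^k : {poly R})).
Proof.
move=> k_gt0 p q eq_pq; apply/polyP => i.
move: (congr1 (fun r : {poly R} => r`_(i * k)) eq_pq).
by rewrite !coef_comp_poly_Xn ?dvdn_mull // mulnK.
Qed.

Section CharPoly.
Variables (R : comNzRingType) (n : nat).
Implicit Types (A : 'M[R]_n) (rs : seq R).

Lemma size_char_poly_roots A rs :
  char_poly A = \prod_(x <- rs) ('X - x%:P) -> size rs = n.
Proof. by move=> cpA; have := size_char_poly A; rewrite cpA size_prod_XsubC => -[]. Qed.

Lemma char_poly_mulmx_sqr_comp A :
  char_poly A * (char_poly A \Po - 'X) = (-1) ^+ n * (char_poly (A *m A) \Po 'X ^+ 2).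
Proof.
have compE (q : {poly R}) M : map_mx (comp_poly q) (char_poly_mx M) = q%:M - map_mx polyC M.
  apply/matrixP => i j; rewrite !mxE comp_polyB comp_polyC.
  by case: eqP => _; rewrite ?mulr1n ?mulr0n ?comp_polyX ?comp_poly0.
rewrite /char_poly -!det_map_mx !compE map_mxM -det_mulmx -detZ.
congr (\det _); apply/matrixP => i j.
rewrite /char_poly_mx !(mulmxBl, mulmxBr, mul_scalar_mx, mul_mx_scalar, scalar_mxM).
by rewrite !mxE; ring.
Qed.

Lemma char_poly_mulmx_sqr A rs :
  char_poly A = \prod_(x <- rs) ('X - x%:P) ->
  char_poly (A *m A) = \prod_(x <- rs) ('X - (x ^+ 2)%:P).
Proof.
move=> cpA; have size_rs := size_char_poly_roots cpA.
have sign_invol (p : {poly R}) : (-1) ^+ n * ((-1) ^+ n * p) = p.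
  by rewrite mulrA -exprMn mulrNN mulr1 expr1n mul1r.
have : (-1) ^+ n * (char_poly (A *m A) \Po 'X ^+ 2) =
       (-1) ^+ n * ((\prod_(x <- rs) ('X - (x ^+ 2)%:P)) \Po 'X ^+ 2).
  rewrite -char_poly_mulmx_sqr_comp cpA !rmorph_prod -size_rs.
  have -> : (-1) ^+ size rs = \prod_(x <- rs) (-1 : {poly R}).
    by rewrite big_const_seq count_predT iter_mulr_1.
  rewrite -!big_split /=; apply: eq_bigr => x _.
  rewrite !(comp_polyB, comp_polyX, comp_polyC); ring.
by move/(congr1 (fun p => (-1) ^+ n * p)); rewrite !sign_invol => /comp_polyXn_inj->.
Qed.

Lemma sum_roots_char_poly A rs :
  char_poly A = \prod_(x <- rs) ('X - x%:P) -> \sum_(x <- rs) x = \tr A.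
Proof.
move=> cpA; have size_rs := size_char_poly_roots cpA.
have [n0 | n_gt0] := posnP n.
  have -> : rs = [::] by apply/size0nil; rewrite size_rs n0.
  by rewrite big_nil /mxtrace big1 // => i; have := leq_trans (ltn_ord i) (eq_leq n0).
apply: oppr_inj; rewrite -char_poly_trace // cpA -coefPn_prod_XsubC size_rs //.
by rewrite -lt0n.
Qed.

Lemma sum_sqr_roots_char_poly A rs :
  char_poly A = \prod_(x <- rs) ('X - x%:P) -> \sum_(x <- rs) x ^+ 2 = \tr (A *m A).
Proof.
move/char_poly_mulmx_sqr; rewrite -(big_map (fun x => x ^+ 2) xpredT (fun y => 'X - y%:P)).
by move/sum_roots_char_poly; rewrite big_map.
Qed.

End CharPoly.

Lemma sumr_nat_of_bool (R : nzSemiRingType) (T : finType) (b : pred T) :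
  \sum_(x : T) ((b x)%:R : R) = #|b|%:R.
Proof.
rewrite -sum1_card natr_sum [RHS]big_mkcond.
by apply: eq_bigr => x _; rewrite unfold_in; case: (b x).
Qed.

Lemma eq_set2 (T : finType) (a b x y : T) : a != b ->
  ([set a; b] == [set x; y]) = ((a, b) == (x, y)) || ((a, b) == (y, x)).
Proof.
move=> neq_ab; apply/idP/idP => [/eqP eq_ab_xy | /orP[] /eqP[-> ->] //].
  have /set2P xy_a : a \in [set x; y] by rewrite -eq_ab_xy set21.
  have /set2P xy_b : b \in [set x; y] by rewrite -eq_ab_xy set22.
  by case: xy_a xy_b neq_ab => -> [] ->; rewrite ?eqxx ?orbT.
by rewrite setUC.
Qed.

Definition regular n (e : rel 'I_n) (d : nat) : Prop := forall x, degree e x = d.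

Section Adjacency.
Variables (n : nat) (e : rel 'I_n).
Hypotheses (e_sym : symmetric e) (e_irr : irreflexive e).

Lemma common_nbrsxx x : common_nbrs e x x = degree e x.
Proof. by rewrite /common_nbrs /degree; under eq_finset do rewrite andbb. Qed.

Lemma adj_mx_sqrE (R : nzRingType) x y :
  (adj_mx R e *m adj_mx R e) x y = (common_nbrs e x y)%:R.
Proof.
rewrite mxE /common_nbrs cardsE -sumr_nat_of_bool; apply: eq_bigr => z _.
by rewrite !mxE -natrM mulnb (e_sym z y).
Qed.

Lemma mxtrace_adj_mx (R : nzRingType) : \tr (adj_mx R e) = 0.
Proof. by rewrite /mxtrace big1 // => x _; rewrite mxE e_irr. Qed.

Lemma is_clique_set2 x y : x != y -> is_clique e [set x; y] = e x y.
Proof.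
move=> neq_xy; apply/forallP/idP => [clique_xy | e_xy a].
  by move: (clique_xy x); rewrite set21 => /forallP /(_ y); rewrite set22 neq_xy.
apply/implyP => /set2P xy_a; apply/forallP => b; apply/implyP => /set2P xy_b.
by case: xy_a xy_b => -> [] ->; rewrite ?eqxx ?e_xy ?implybT // e_sym e_xy implybT.
Qed.

Variable d : nat.
Hypothesis e_reg : regular e d.

Lemma mxtrace_adj_mx_sqr (R : nzRingType) :
  \tr (adj_mx R e *m adj_mx R e) = (n * d)%:R.
Proof.
rewrite /mxtrace (eq_bigr (fun=> d%:R)) => [|x _]; last by rewrite adj_mx_sqrE common_nbrsxx e_reg.
by rewrite sumr_const card_ord natrM mulr_natl.
Qed.

Lemma adj_mx_const1 (R : nzRingType) :
  adj_mx R e *m const_mx 1 = d%:R *: (const_mx 1 : 'cV[R]_n).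
Proof.
apply/matrixP => x j; rewrite !mxE mulr1 -(e_reg x) /degree cardsE -sumr_nat_of_bool.
by apply: eq_bigr => z _; rewrite !mxE mulr1.
Qed.

Lemma num_edges_regular : (2 * num_edges e = n * d)%N.
Proof.
set E := [set K : {set 'I_n} | (#|K| == 2)%N && is_clique e K].
have arcs : (\sum_(p : 'I_n * 'I_n | e p.1 p.2) 1 = n * d)%N.
  rewrite -(pair_big_dep xpredT e (fun _ _ => 1%N)) /= (eq_bigr (fun=> d)).
    by rewrite sum_nat_const card_ord mulnC.
  by move=> x _; rewrite -(e_reg x) /degree cardsE -sum1_card.
have neq_arc a b : e a b -> a != b by apply: contraTneq => ->; rewrite e_irr.
rewrite -arcs (partition_big (fun p => [set p.1; p.2]) (mem E)) => [|[a b] /= e_ab]; last first.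
  by rewrite inE cards2 neq_arc // is_clique_set2 ?neq_arc.
rewrite /num_edges -/E mulnC -sum_nat_const; apply: eq_bigr => K.
rewrite inE => /andP[/cards2P[x [y [neq_xy ->]]]]; rewrite is_clique_set2 // => e_xy.
have neq_swap : (x, y) != (y, x) by rewrite xpair_eqE negb_and neq_xy.
rewrite -[2%N]/(true.+1) -neq_swap -card2 -sum1_card; apply: eq_bigl => -[a b] /=.
rewrite inE; apply/idP/andP => [ | [e_ab]]; last by rewrite eq_set2 ?neq_arc.
by case/orP => /eqP[-> ->]; split; rewrite 1?setUC ?eqxx // e_sym.
Qed.

End Adjacency.

Lemma eigenvalue_adj_mx_regular (R : fieldType) n (e : rel 'I_n) d (t : R) :
  regular e d -> eigenvalue (adj_mx R e) t -> t = d%:R \/ restricted_eigenvalue e t.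
Proof.
move=> e_reg /eigenvalueP[v eigen_v v_neq0].
have [v_perp | v_not_perp] := eqVneq (v *m (const_mx 1 : 'cV[R]_n)) 0; first by right; exists v.
left; apply/eqP; rewrite -subr_eq0; move: v_not_perp; apply: contraNT => neq_td.
have : (t - d%:R) *: (v *m (const_mx 1 : 'cV[R]_n)) = 0.
  by rewrite scalerBl scalemxAl -eigen_v -mulmxA (adj_mx_const1 e_reg) scalemxAr subrr.
by move/eqP; rewrite scaler_eq0 (negbTE neq_td).
Qed.

Lemma restricted_eigenvalue_n_gt0 (R : fieldType) n (e : rel 'I_n) (t : R) :
  restricted_eigenvalue e t -> (0 < n)%N.
Proof. by case: n e => // e [v [v_neq0 _ _]]; rewrite thinmx0 eqxx in v_neq0. Qed.

Lemma restricted_eigenvalue_edgeless (R : fieldType) n (e : rel 'I_n) (t : R) :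
  regular e 0 -> restricted_eigenvalue e t -> t = 0.
Proof.
move=> e_reg [v [v_neq0 eigen_v _]].
have adj0 : adj_mx R e = 0.
  by apply/matrixP => x y; move/cards0_eq/setP/(_ y): (e_reg x); rewrite !mxE inE in_set0 => ->.
move/eqP: eigen_v; rewrite adj0 mulmx0 eq_sym scaler_eq0 (negbTE v_neq0) orbF.
by move/eqP.
Qed.

Lemma quadratic_vieta (R : idomainType) (b c r s : R) :
  r != s -> r ^+ 2 = b * r + c -> s ^+ 2 = b * s + c -> r + s = b /\ r * s = - c.
Proof.
move=> neq_rs root_r root_s.
have sum_rs : r + s = b.
  have : (r - s) * (r + s - b) = (r ^+ 2 - (b * r + c)) - (s ^+ 2 - (b * s + c)) by ring.
  by rewrite root_r root_s !subrr => /eqP; rewrite mulf_eq0 !subr_eq0 (negbTE neq_rs) => /eqP.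
have -> : r * s = r * (r + s) - r ^+ 2 by ring.
by rewrite sum_rs root_r; split=> //; ring.
Qed.

Section StronglyRegular.
Variables (n : nat) (e : rel 'I_n) (d lam mu : nat).
Hypothesis e_srg : srg e d lam mu.

(* If G is complete, srg does not constrain mu; mu' is then 0, so that mu' <= d. *)
Lemma srg_common_nbrs : exists2 mu' : nat, (mu' <= d)%N &
  forall x y, common_nbrs e x y = if x == y then d else if e x y then lam else mu'.
Proof.
have [[e_sym _] e_reg lamE muE] := e_srg.
have common_nbrsE mu' : (forall x y, x != y -> ~~ e x y -> common_nbrs e x y = mu') ->
    forall x y, common_nbrs e x y = if x == y then d else if e x y then lam else mu'.
  move=> mu'E x y; case: eqVneq => [-> | neq_xy]; first by rewrite common_nbrsxx.
  by case: ifPn => [/lamE | /(mu'E x y neq_xy)].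
case: (pickP (fun p : 'I_n * 'I_n => (p.1 != p.2) && ~~ e p.1 p.2)) => [[x y] | complete].
  case/andP=> neq_xy ne_xy; exists mu; last exact: common_nbrsE.
  rewrite -(muE x y neq_xy ne_xy) -(e_reg x); apply/subset_leq_card/subsetP => z.
  by rewrite !inE => /andP[].
exists 0%N => //; apply: common_nbrsE => x y neq_xy ne_xy.
by move: (complete (x, y)); rewrite /= neq_xy ne_xy.
Qed.

Lemma srg_lam_lt_deg : (0 < n)%N -> (0 < d)%N -> (lam < d)%N.
Proof.
have [[_ e_irr] e_reg lamE _] := e_srg.
move=> n_gt0; rewrite -(e_reg (Ordinal n_gt0)) => /card_gt0P[y]; rewrite inE => e_xy.
rewrite -(lamE _ _ e_xy); apply/proper_card/properP; split.
  by apply/subsetP => z; rewrite !inE => /andP[].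
by exists y; rewrite !inE ?e_xy // e_irr andbF.
Qed.

Variable mu' : nat.
Hypothesis common_nbrsE :
  forall x y, common_nbrs e x y = if x == y then d else if e x y then lam else mu'.

Lemma srg_adj_mx_sqr (R : comNzRingType) :
  adj_mx R e *m adj_mx R e =
    (lam%:R - mu'%:R) *: adj_mx R e + (d%:R - mu'%:R)%:M + mu'%:R *: const_mx 1.
Proof.
have [[e_sym e_irr] _ _ _] := e_srg.
apply/matrixP => x y; rewrite adj_mx_sqrE // common_nbrsE !mxE.
by case: eqVneq => [-> | _]; rewrite ?e_irr //=; case: (e x y) => /=; ring.
Qed.

Lemma restricted_eigenvalue_srg (R : fieldType) (t : R) : restricted_eigenvalue e t ->
  t ^+ 2 = (lam%:R - mu'%:R) * t + (d%:R - mu'%:R).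
Proof.
move=> [v [v_neq0 eigen_v v_perp]].
have all_ones : const_mx 1 = (const_mx 1 : 'cV[R]_n) *m (const_mx 1 : 'rV[R]_n).
  by apply/matrixP => i j; rewrite !mxE big_ord1 !mxE mulr1.
have : v *m (adj_mx R e *m adj_mx R e) = t ^+ 2 *: v.
  by rewrite mulmxA eigen_v -scalemxAl eigen_v scalerA expr2.
rewrite srg_adj_mx_sqr !mulmxDr -!scalemxAr eigen_v all_ones mulmxA v_perp.
rewrite mul0mx scaler0 addr0 mul_mx_scalar scalerA -scalerDl => /eqP.
by rewrite -subr_eq0 -scalerBl scaler_eq0 (negbTE v_neq0) orbF subr_eq0 => /eqP->.
Qed.

End StronglyRegular.

Lemma srg_restricted_eigenvalue_bounds (R : realFieldType) n (e : rel 'I_n) d lam mu (r s : R) :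
  srg e d lam mu -> restricted_eigenvalue e r -> restricted_eigenvalue e s -> s < r ->
  [/\ 0 < d%:R :> R, s < 0, 0 <= r & r <= d%:R].
Proof.
move=> e_srg Er Es lt_sr; have [_ e_reg _ _] := e_srg.
have n_gt0 := restricted_eigenvalue_n_gt0 Er.
have d_gt0 : (0 < d)%N.
  rewrite lt0n; apply: contraTneq lt_sr => d0; rewrite d0 in e_reg.
  have edgeless (t : R) : restricted_eigenvalue e t -> t = 0.
    exact: restricted_eigenvalue_edgeless.
  by rewrite (edgeless _ Er) (edgeless _ Es) ltxx.
have lam_lt_d := srg_lam_lt_deg e_srg n_gt0 d_gt0.
have [mu' mu'_le_d common_nbrsE] := srg_common_nbrs e_srg.
have quadratic := restricted_eigenvalue_srg e_srg common_nbrsE (R := R).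
have [sum_rs prod_rs] := quadratic_vieta (negbT (gt_eqF lt_sr)) (quadratic _ Er) (quadratic _ Es).
have D_gt0 : 0 < d%:R :> R by rewrite ltr0n.
have M_ge0 : 0 <= mu'%:R :> R by rewrite ler0n.
have M_le_D : mu'%:R <= d%:R :> R by rewrite ler_nat.
have L_lt_D : lam%:R + 1 <= d%:R :> R by rewrite -[1]/(1%:R) -natrD ler_nat addn1.
have s_lt0 : s < 0 by nra.
have r_ge0 : 0 <= r by nra.
(* (d - r) (d - s) = d (d - 1 - lam) + mu' (d + 1) >= 0 *)
split=> //; nra.
Qed.

Lemma srg_eigenvalue_range (R : realFieldType) n (e : rel 'I_n) d lam mu (r s t : R) :
  srg e d lam mu -> restricted_eigenvalue e r -> restricted_eigenvalue e s -> s < r ->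
  (forall t, restricted_eigenvalue e t -> t = r \/ t = s) ->
  eigenvalue (adj_mx R e) t -> (0 <= t <= d%:R) || (t == s).
Proof.
move=> e_srg Er Es lt_sr restrictedE; have [_ e_reg _ _] := e_srg.
have [d_gt0 _ r_ge0 r_le_d] := srg_restricted_eigenvalue_bounds e_srg Er Es lt_sr.
case/(eigenvalue_adj_mx_regular e_reg) => [-> | /restrictedE[] ->].
- by rewrite ler0n lexx.
- by rewrite r_ge0 r_le_d.
- by rewrite eqxx orbT.
Qed.

Lemma take_count_sorted (T : eqType) (leT : rel T) (P : pred T) (s : seq T) :
  transitive leT -> (forall x y, leT x y -> P y -> P x) -> sorted leT s ->
  take (count P s) s = filter P s.
Proof.
move=> leT_tr P_antimono; elim: s => //= x s IHs sorted_xs.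
case: ifP => Px; first by rewrite add1n /= IHs ?(path_sorted sorted_xs).
have no_P : ~~ has P s.
  rewrite -all_predC; apply: sub_all (order_path_min leT_tr sorted_xs) => y le_xy /=.
  by apply: contraFN Px; apply: P_antimono.
move: (no_P); rewrite add0n has_count lt0n negbK => /eqP->.
by move: no_P; rewrite has_filter negbK => /eqP->.
Qed.

Lemma sum_sqr_prefix_le_pos (R : realDomainType) (s : seq R) k :
  sorted (fun x y => y <= x) s -> (k <= count (fun x => (0 < x)%R) s)%N ->
  \sum_(i < k) s`_i ^+ 2 <= \sum_(x <- s | 0 < x) x ^+ 2.
Proof.
move=> s_sorted k_le_pos.
have k_le_size : (k <= size s)%N := leq_trans k_le_pos (count_size _ _).
have -> : \sum_(i < k) s`_i ^+ 2 = \sum_(x <- take k s) x ^+ 2.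
  rewrite (big_nth 0) size_takel // big_mkord; apply: eq_bigr => i _.
  by rewrite nth_take.
rewrite -[X in _ <= X]big_filter -(take_count_sorted _ _ s_sorted); last first.
- by move=> x y le_yx /lt_le_trans; apply.
- by move=> y x z le_xy le_zx; apply: le_trans le_zx le_xy.
rewrite -(take_takel _ k_le_pos) -[X in _ <= \sum_(x <- X) _](cat_take_drop k).
by rewrite big_cat lerDl sumr_ge0 // => x _; apply: sqr_ge0.
Qed.

Lemma pos_sqr_le_weight (R : realFieldType) (d s t : R) :
  0 < d -> s < 0 -> (0 <= t <= d) || (t == s) ->
  (if 0 < t then t ^+ 2 else 0) <= d / (d - s) * (t * (t - s)).
Proof.
move=> d_gt0 s_lt0 /orP[/andP[t_ge0 t_le_d] | /eqP->]; last first.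
  by rewrite ltNge (ltW s_lt0) subrr !mulr0.
have ds_gt0 : 0 < d - s by rewrite subr_gt0 (lt_trans s_lt0).
have gap : d / (d - s) * (t * (t - s)) - t ^+ 2 = (- s) * t * (d - t) / (d - s).
  by field; rewrite gt_eqF.
have gap_ge0 : t ^+ 2 <= d / (d - s) * (t * (t - s)).
  by rewrite -subr_ge0 gap divr_ge0 ?(ltW ds_gt0) // !mulr_ge0 // ?subr_ge0 // oppr_ge0 ltW.
by case: ifP => // _; apply: le_trans gap_ge0; apply: sqr_ge0.
Qed.

Lemma clique_bound_ratio (R : realFieldType) (w d s : R) :
  0 < d -> s < 0 -> w = 1 - d / s -> (w - 1) / w = d / (d - s).
Proof.
move=> d_gt0 s_lt0 ->; have lt_sd : s < d := lt_trans s_lt0 d_gt0.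
by field; rewrite subr_eq0 gt_eqF // lt_eqF //= subr_eq0 lt_eqF.
Qed.

Unset Implicit Arguments.

Theorem mainTheorem4 (R : rcfType) (n : nat) (e : rel 'I_n) (d lam mu : nat)
    (r s : R) (theta : seq R) :
  srg e d lam mu ->
  restricted_eigenvalue e r -> restricted_eigenvalue e s -> s < r ->
  (forall t : R, restricted_eigenvalue e t -> t = r \/ t = s) ->
  (clique_number e)%:R = 1 - d%:R / s ->
  sorted_spectrum e theta ->
  let m := num_edges e in
  let w := clique_number e in
  let npos := count (fun x => 0 < x) theta in
  let l := minn npos w in
  \sum_(i < l) (nth 0 theta i) ^+ 2 <= 2 * m%:R * (w%:R - 1) / w%:R.
Proof.
move=> e_srg Er Es lt_sr restrictedE cliqueE [theta_sorted cpE] /=.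
have [[e_sym e_irr] e_reg _ _] := e_srg.
have [d_gt0 s_lt0 _ _] := srg_restricted_eigenvalue_bounds e_srg Er Es lt_sr.
have -> : 2 * (num_edges e)%:R * ((clique_number e)%:R - 1) / (clique_number e)%:R =
          d%:R / (d%:R - s) * (n * d)%:R.
  rewrite -mulrA (clique_bound_ratio d_gt0 s_lt0 cliqueE) -natrM.
  by rewrite (num_edges_regular e_sym e_irr e_reg) mulrC.
apply: le_trans (sum_sqr_prefix_le_pos theta_sorted (geq_minl _ _)) _.
rewrite big_mkcond /=.
apply: le_trans (_ : \sum_(t <- theta) d%:R / (d%:R - s) * (t * (t - s)) <= _).
  rewrite big_seq [X in _ <= X]big_seq; apply: ler_sum => t t_theta.
  apply: pos_sqr_le_weight d_gt0 s_lt0 (srg_eigenvalue_range e_srg Er Es lt_sr restrictedE _).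
  by rewrite eigenvalue_root_char cpE root_prod_XsubC.
rewrite -mulr_sumr (eq_bigr (fun t => t ^+ 2 - s * t)) => [|t _]; last by ring.
rewrite sumrB -mulr_sumr (sum_sqr_roots_char_poly cpE) (sum_roots_char_poly cpE).
by rewrite (mxtrace_adj_mx_sqr e_sym e_reg) mxtrace_adj_mx // mulr0 subr0.
Qed.
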